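(* Let $K$ be a strictly positive definite kernel on $\Omega\subset\mathbb{R}^d$, $\lambda>0$, and $X_n=\{x_1,\dots,x_n\}\subset\Omega$ pairwise distinct. Then $P_n^\lambda(x)\le\sqrt{\lambda}$ for all $x\in X_n$, and $$P_n(x)\le P_n^\lambda(x)\le Q_n^\lambda(x)\quad\text{for all }x\in\Omega\setminus X_n .$$ In particular $\sup_{x\in\Omega}P_n^\lambda(x)\le\sup_{x\in\Omega}Q_n^\lambda(x)$.
   Context: $\mathcal{H}$ is the native space (reproducing kernel Hilbert space) of $K$ on $\Omega$. Let $\delta(x,y)=1$ if $x=y$ and $0$ otherwise, $K_\lambda(x,y):=K(x,y)+\lambda\delta(x,y)$, and $\mathcal{H}_\lambda$ the native space of $K_\lambda$. Let $A=(K(x_i,x_j))_{i,j=1}^n$. For $\mu\ge0$ and $f:\Omega\to\mathbb{R}$, $s_n^\mu(f):=\sum_j\alpha_jK(\cdot,x_j)$ with $(A+\mu I)\alpha=(f(x_i))_{i=1}^n$, and $I_n^\lambda(f):=\sum_j\alpha_jK_\lambda(\cdot,x_j)$ with $(A+\lambda I)\alpha=(f(x_i))_i$ (the interpolant of $f$ in $\mathcal{H}_\lambda$). Power functions: $P_n^\lambda(x):=\sup_{f\in\mathcal{H},f\ne0}|f(x)-s_n^\lambda(f)(x)|/\|f\|_{\mathcal{H}}$, $P_n:=P_n^0$ (power function of interpolation), and $Q_n^\lambda(x):=\sup_{f\in\mathcal{H}_\lambda,f\ne0}|f(x)-I_n^\lambda(f)(x)|/\|f\|_{\mathcal{H}_\lambda}$.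 *)

From HB Require Import structures.
From mathcomp Require Import all_boot all_order all_algebra.
From mathcomp Require Import classical_sets boolp reals ereal.
Set Implicit Arguments. Unset Strict Implicit. Unset Printing Implicit Defensive.
Import Order.TTheory GRing.Theory Num.Theory.
Local Open Scope classical_set_scope.
Local Open Scope ring_scope.

Section Defs.
Variables (R : realType) (d : nat).
Local Notation T := 'rV[R]_d.

Definition qform (K : T -> T -> R) (m : nat) (y : 'I_m -> T) (a : 'I_m -> R) : R :=
  \sum_(i < m) \sum_(j < m) a i * a j * K (y i) (y j).

Definition spd_kernel (Omega : set T) (K : T -> T -> R) : Prop :=
  (forall x y, Omega x -> Omega y -> K x y = K y x) /\
  (forall (m : nat) (y : 'I_m -> T) (a : 'I_m -> R),
      (forall i, Omega (y i)) -> injective y -> (exists i, a i != 0) ->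
      0 < qform K y a).

Definition Klam (K : T -> T -> R) (lam : R) (x y : T) : R :=
  K x y + (if x == y then lam else 0).

(* Native space norm of f (restricted to Omega), with value +oo when f is not
   in the native space:
   ||f||_K = sup { |sum_i a_i f(y_i)| / sqrt(sum_ij a_i a_j K(y_i,y_j)) }. *)
Definition native_norm (K : T -> T -> R) (Omega : set T) (f : T -> R) : \bar R :=
  ereal_sup [set r : \bar R | exists (m : nat) (y : 'I_m -> T) (a : 'I_m -> R),
    [/\ (forall i, Omega (y i)), 0 < qform K y a &
        r = (`| \sum_(i < m) a i * f (y i) | / Num.sqrt (qform K y a))%:E] ].

Definition in_native (K : T -> T -> R) (Omega : set T) (f : T -> R) : Prop :=
  (native_norm K Omega f < +oo)%E.

Definition gram (K : T -> T -> R) (n : nat) (X : 'I_n -> T) : 'M[R]_n :=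
  \matrix_(i, j) K (X i) (X j).

Definition kinterp (Kev : T -> T -> R) (n : nat) (M : 'M[R]_n) (X : 'I_n -> T)
  (f : T -> R) (y : T) : R :=
  \sum_(j < n) (invmx M *m \col_i f (X i)) j 0 * Kev y (X j).

Definition s_n (K : T -> T -> R) (n : nat) (X : 'I_n -> T) (mu : R)
  (f : T -> R) : T -> R := kinterp K (gram K X + mu%:M) X f.

Definition I_n (K : T -> T -> R) (n : nat) (X : 'I_n -> T) (lam : R)
  (f : T -> R) : T -> R := kinterp (Klam K lam) (gram K X + lam%:M) X f.

Definition power_fun (Kn : T -> T -> R) (Omega : set T)
  (app : (T -> R) -> T -> R) (x : T) : \bar R :=
  ereal_sup [set ((`| f x - app f x | / fine (native_norm Kn Omega f))%:E)
    | f in [set f : T -> R | in_native Kn Omega f /\ exists y, Omega y /\ f y != 0]].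

Definition P_n (K : T -> T -> R) (Omega : set T) (n : nat) (X : 'I_n -> T)
  (lam : R) : T -> \bar R := power_fun K Omega (s_n K X lam).

Definition Q_n (K : T -> T -> R) (Omega : set T) (n : nat) (X : 'I_n -> T)
  (lam : R) : T -> \bar R := power_fun (Klam K lam) Omega (I_n K X lam).

End Defs.

From HB Require Import structures.
From mathcomp Require Import all_boot all_order all_algebra.
From mathcomp Require Import classical_sets boolp reals ereal.
From mathcomp Require Import ring lra.
Set Implicit Arguments. Unset Strict Implicit. Unset Printing Implicit Defensive.
Import Order.TTheory GRing.Theory Num.Theory.
Local Open Scope classical_set_scope.
Local Open Scope ring_scope.

(* Off the nodes, f |-> f(x) - s_n^mu(f)(x) is the functional
   f |-> sum_l c_l f(z_l) on the enlarged nodes z = (x, X_1, ..., X_n) with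
   c = (1, -u_mu), u_mu = k_x (A + mu I)^-1.  By Cauchy-Schwarz and its Riesz
   representer sum_l c_l K(., z_l), its norm on the native space is
   sqrt (c^T K[z] c), so P_n^mu(x)^2 = K(x,x) + u_mu A u_mu^T - 2 u_mu k_x^T.
   This quadratic in u is minimal at u_0 = k_x A^-1, whence P_n <= P_n^lambda.
   Since x is not a node, I_n^lambda uses the same weights u_lambda, while
   K_lambda adds lambda |c|^2 >= lambda to the quadratic form: hence
   P_n^lambda <= Q_n^lambda and sqrt lambda <= Q_n^lambda.  At a node X_i,
   f(X_i) - s_n^lambda(f)(X_i) = lambda alpha_i with (A + lambda I) alpha = f|X,
   and alpha^T A alpha + lambda |alpha|^2 = sum_j alpha_j f(X_j)
   <= ||f|| sqrt (alpha^T A alpha) bounds lambda alpha_i by sqrt lambda ||f||. *)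

Section KernelInterpolation.
Variables (R : realType) (d : nat).
Local Notation T := 'rV[R]_d.

Definition catf (U : Type) m r (y : 'I_m -> U) (z : 'I_r -> U) (i : 'I_(m + r)) : U :=
  match split i with inl i => y i | inr j => z j end.

Lemma catf_lshift U m r y z i : @catf U m r y z (lshift r i) = y i.
Proof. by rewrite /catf (unsplitK (inl _ i)). Qed.

Lemma catf_rshift U m r y z i : @catf U m r y z (rshift m i) = z i.
Proof. by rewrite /catf (unsplitK (inr _ i)). Qed.

Lemma catf_in U (A : set U) m r (y : 'I_m -> U) (z : 'I_r -> U) :
  (forall i, A (y i)) -> (forall j, A (z j)) -> forall l, A (catf y z l).
Proof. by move=> Ay Az l; rewrite /catf; case: split. Qed.

Definition bform (k : T -> T -> R) m r (y : 'I_m -> T) (a : 'I_m -> R)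
    (z : 'I_r -> T) (b : 'I_r -> R) : R :=
  \sum_(i < m) \sum_(j < r) a i * b j * k (y i) (z j).

Lemma qformE k m (y : 'I_m -> T) a : qform k y a = bform k y a y a.
Proof. by []. Qed.

Lemma bformZl k m r (y : 'I_m -> T) a (z : 'I_r -> T) b s :
  bform k y (fun i => s * a i) z b = s * bform k y a z b.
Proof.
rewrite /bform mulr_sumr; apply: eq_bigr => i _; rewrite mulr_sumr.
by apply: eq_bigr => j _; ring.
Qed.

Lemma qformZ k m (y : 'I_m -> T) a s :
  qform k y (fun i => s * a i) = s ^+ 2 * qform k y a.
Proof.
rewrite /qform mulr_sumr; apply: eq_bigr => i _; rewrite mulr_sumr.
by apply: eq_bigr => j _; ring.
Qed.

Lemma qform0 k m (y : 'I_m -> T) : qform k y (fun _ => 0) = 0.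
Proof. by rewrite /qform big1 // => i _; rewrite big1 // => j _; rewrite !mul0r. Qed.

Lemma qform_cat k m r (y : 'I_m -> T) a (z : 'I_r -> T) b :
  qform k (catf y z) (catf a b) =
  qform k y a + bform k y a z b + bform k z b y a + qform k z b.
Proof.
rewrite /qform /bform big_split_ord /= -!big_split /= -addrA; congr (_ + _).
  apply: eq_bigr => i _; rewrite big_split_ord /= !catf_lshift; congr (_ + _);
  by apply: eq_bigr => j _; rewrite ?catf_lshift ?catf_rshift.
rewrite -big_split /=; apply: eq_bigr => i _.
rewrite big_split_ord /= !catf_rshift; congr (_ + _);
by apply: eq_bigr => j _; rewrite ?catf_lshift ?catf_rshift.
Qed.

Lemma qform_comp k m r (p : 'I_m -> 'I_r) (w : 'I_r -> T) a :
  qform k (fun i => w (p i)) a = qform k w (fun l => \sum_(i | p i == l) a i).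
Proof.
rewrite /qform (partition_big p xpredT) //=; apply: eq_bigr => l _.
transitivity (\sum_(i | p i == l) a i *
    \sum_(l' < r) (\sum_(j | p j == l') a j) * k (w l) (w l')).
  apply: eq_bigr => i /eqP ->; rewrite mulr_sumr (partition_big p xpredT) //=.
  apply: eq_bigr => l' _; rewrite mulr_suml mulr_sumr; apply: eq_bigr => j /eqP ->.
  by rewrite mulrA.
rewrite -mulr_suml mulr_sumr; apply: eq_bigr => l' _.
by rewrite mulrA.
Qed.

Definition sym_on (Omega : set T) (k : T -> T -> R) : Prop :=
  forall x y, Omega x -> Omega y -> k x y = k y x.

Definition psd_on (Omega : set T) (k : T -> T -> R) : Prop :=
  forall m (y : 'I_m -> T) a, (forall i, Omega (y i)) -> 0 <= qform k y a.

Lemma bformC Omega k m r (y : 'I_m -> T) a (z : 'I_r -> T) b :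
  sym_on Omega k -> (forall i, Omega (y i)) -> (forall j, Omega (z j)) ->
  bform k z b y a = bform k y a z b.
Proof.
move=> ksym Oy Oz; rewrite /bform exchange_big; apply: eq_bigr => i _.
by apply: eq_bigr => j _; rewrite ksym // [b _ * _]mulrC.
Qed.

(* A family with repetitions is the composite of an injective one (its list of
   distinct points) with an index map, so [qform_comp] reduces it to that. *)
Lemma psd_on_injective Omega k :
  (forall r (w : 'I_r -> T) b, injective w -> (forall i, Omega (w i)) ->
     0 <= qform k w b) ->
  psd_on Omega k.
Proof.
move=> kpsd m y a Oy.
set s := undup [seq y i | i <- enum 'I_m].
have ys i : (index (y i) s < size s)%N.
  by rewrite index_mem mem_undup map_f // mem_enum.
pose p i : 'I_(size s) := Ordinal (ys i).
pose w (l : 'I_(size s)) := nth 0 s l.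
have -> : y = fun i => w (p i).
  by apply: funext => i; rewrite /w /= nth_index // -index_mem ys.
rewrite qform_comp; apply: kpsd.
  move=> l1 l2 /eqP; rewrite /w nth_uniq ?undup_uniq // => /eqP; exact: val_inj.
move=> l; have : w l \in s by rewrite /w mem_nth.
by rewrite mem_undup => /mapP [i _ ->].
Qed.

Lemma spd_kernel_psd Omega K : spd_kernel Omega K -> psd_on Omega K.
Proof.
move=> [_ Kpd]; apply: psd_on_injective => r w b winj Ow.
have [[i bi]|b0] := pselect (exists i, b i != 0).
  by apply/ltW/Kpd => //; exists i.
suff -> : b = fun _ => 0 by rewrite qform0.
by apply: funext => i; apply/eqP; apply: contra_notT b0 => bi; exists i.
Qed.

Lemma Klam_sym Omega K lam : sym_on Omega K -> sym_on Omega (Klam K lam).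
Proof. by move=> Ksym x y Ox Oy; rewrite /Klam Ksym // eq_sym. Qed.

Lemma qform_Klam K lam r (w : 'I_r -> T) b : injective w ->
  qform (Klam K lam) w b = qform K w b + lam * \sum_i b i ^+ 2.
Proof.
move=> winj; rewrite /qform /Klam mulr_sumr -big_split /=; apply: eq_bigr => i _.
under eq_bigr do rewrite mulrDr.
rewrite big_split /=; congr (_ + _).
rewrite (bigD1 i) //= eqxx big1 ?addr0; first by rewrite expr2; ring.
by move=> j /negbTE; rewrite (inj_eq winj) eq_sym => ->; rewrite mulr0.
Qed.

Lemma Klam_psd Omega K lam : spd_kernel Omega K -> 0 <= lam ->
  psd_on Omega (Klam K lam).
Proof.
move=> Kspd lam_ge0; apply: psd_on_injective => r w b winj Ow.
rewrite qform_Klam //; apply: addr_ge0; first exact: spd_kernel_psd Kspd _ _ _ Ow.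
by apply: mulr_ge0 => //; apply: sumr_ge0 => i _; apply: sqr_ge0.
Qed.

Lemma ler_norm_div (L N s : R) : 0 <= s -> (0 < N -> `|L| <= N * s) -> `|L| / N <= s.
Proof.
move=> s_ge0 LNs; have [N_le0|N_gt0] := leP N 0.
  by apply: le_trans s_ge0; apply: mulr_ge0_le0 => //; rewrite invr_le0.
by rewrite ler_pdivrMr // mulrC; apply: LNs.
Qed.

Lemma div_sqrtr (q : R) : 0 < q -> q / Num.sqrt q = Num.sqrt q.
Proof.
move=> q_gt0; rewrite -{1}(sqr_sqrtr (ltW q_gt0)) expr2 mulfK //.
by rewrite gt_eqF // sqrtr_gt0.
Qed.

Section NativeSpace.
Variables (Omega : set T) (k : T -> T -> R).

Definition kernel_comb m (z : 'I_m -> T) (c : 'I_m -> R) (t : T) : R :=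
  \sum_(j < m) c j * k t (z j).

Lemma sum_kernel_comb m r (y : 'I_m -> T) a (z : 'I_r -> T) c :
  \sum_(i < m) a i * kernel_comb z c (y i) = bform k y a z c.
Proof.
by apply: eq_bigr => i _; rewrite mulr_sumr; apply: eq_bigr => j _; rewrite mulrA.
Qed.

Lemma native_norm_bound f m (y : 'I_m -> T) a :
  in_native k Omega f -> (forall i, Omega (y i)) -> 0 < qform k y a ->
  `|\sum_i a i * f (y i)| <= fine (native_norm k Omega f) * Num.sqrt (qform k y a).
Proof.
rewrite /in_native => f_native Oy qa_gt0.
have : ((`|\sum_i a i * f (y i)| / Num.sqrt (qform k y a))%:E
    <= native_norm k Omega f)%E by apply: ereal_sup_ubound; exists m, y, a.
move: f_native; case: native_norm => [N| |] //= _.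
by rewrite lee_fin ler_pdivrMr // sqrtr_gt0.
Qed.

Lemma power_fun_le app x m (z : 'I_m -> T) c :
  (forall i, Omega (z i)) -> 0 < qform k z c ->
  (forall f, f x - app f x = \sum_i c i * f (z i)) ->
  (power_fun k Omega app x <= (Num.sqrt (qform k z c))%:E)%E.
Proof.
move=> Oz qc_gt0 errE; apply: ge_ereal_sup => _ [f [f_native _] <-].
rewrite lee_fin errE; apply: ler_norm_div => [|_]; first exact: sqrtr_ge0.
exact: native_norm_bound.
Qed.

Hypotheses (ksym : sym_on Omega k) (kpsd : psd_on Omega k).

Lemma bform_Cauchy_Schwarz m r (y : 'I_m -> T) a (z : 'I_r -> T) c :
  (forall i, Omega (y i)) -> (forall j, Omega (z j)) -> 0 < qform k y a ->
  bform k y a z c ^+ 2 <= qform k y a * qform k z c.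
Proof.
move=> Oy Oz qa_gt0.
set Qa := qform k y a; set Qc := qform k z c; set B := bform k y a z c.
set t := B / Qa; have BE : B = t * Qa by rewrite /t divfK // gt_eqF.
(* 0 <= q(c - t a) on the joint family (y, z) *)
have := kpsd (catf (fun i => - t * a i) c) (catf_in Oy Oz).
rewrite qform_cat qformZ (bformC _ _ ksym Oy Oz) !bformZl -/Qa -/Qc -/B BE.
rewrite (_ : _ + _ = Qc - t ^+ 2 * Qa); last by ring.
move=> q_ge0; rewrite -subr_ge0 (_ : _ - _ = Qa * (Qc - t ^+ 2 * Qa)); last by ring.
exact: mulr_ge0 (ltW qa_gt0) q_ge0.
Qed.

Lemma native_norm_kernel_comb m (z : 'I_m -> T) c :
  (forall i, Omega (z i)) -> 0 < qform k z c ->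
  native_norm k Omega (kernel_comb z c) = (Num.sqrt (qform k z c))%:E.
Proof.
move=> Oz qc_gt0; apply/le_anti/andP; split.
  apply: ge_ereal_sup => _ [r [y [a [Oy qa_gt0 ->]]]].
  rewrite lee_fin ler_pdivrMr ?sqrtr_gt0 // sum_kernel_comb.
  rewrite -sqrtr_sqr -sqrtrM ?(ltW qc_gt0) // mulrC.
  exact/ler_wsqrtr/bform_Cauchy_Schwarz.
apply: ereal_sup_ubound; exists m, z, c; split => //.
by rewrite sum_kernel_comb -qformE ger0_norm ?(ltW qc_gt0) // div_sqrtr.
Qed.

(* The error functional is represented by [kernel_comb z c], on which the
   bound of [power_fun_le] is attained. *)
Lemma power_fun_eq app x m (z : 'I_m -> T) c :
  (forall i, Omega (z i)) -> 0 < qform k z c ->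
  (forall f, f x - app f x = \sum_i c i * f (z i)) ->
  power_fun k Omega app x = (Num.sqrt (qform k z c))%:E.
Proof.
move=> Oz qc_gt0 errE; apply/le_anti; rewrite power_fun_le //=.
have gz : \sum_i c i * kernel_comb z c (z i) = qform k z c by rewrite sum_kernel_comb.
have gnorm := native_norm_kernel_comb Oz qc_gt0.
apply: ereal_sup_ubound; exists (kernel_comb z c).
  split; first by rewrite /in_native gnorm ltry.
  have [i gi] : exists i, kernel_comb z c (z i) != 0.
    apply/existsP; apply: contraTT qc_gt0 => /existsPn g0.
    by rewrite -gz big1 ?ltxx // => i _; rewrite (eqP (negPn (g0 i))) mulr0.
  by exists (z i).
by rewrite gnorm /= errE gz ger0_norm ?(ltW qc_gt0) // div_sqrtr.
Qed.

End NativeSpace.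

Lemma qform_gram k n (X : 'I_n -> T) (v : 'rV[R]_n) :
  (v *m gram k X *m v^T) 0 0 = qform k X (fun i => v 0 i).
Proof.
rewrite mxE /qform; under eq_bigr do rewrite !mxE mulr_suml.
rewrite [RHS]exchange_big /=; apply: eq_bigr => i _; apply: eq_bigr => j _.
by rewrite !mxE; ring.
Qed.

Lemma qform_scalar_mx n (v : 'rV[R]_n) mu :
  (v *m mu%:M *m v^T) 0 0 = mu * \sum_i v 0 i ^+ 2.
Proof.
rewrite mul_mx_scalar -scalemxAl mxE mxE; congr (_ * _); apply: eq_bigr => i _.
by rewrite !mxE expr2.
Qed.

Lemma gram_sym Omega k n (X : 'I_n -> T) :
  sym_on Omega k -> (forall i, Omega (X i)) -> (gram k X)^T = gram k X.
Proof. by move=> ksym OX; apply/matrixP => i j; rewrite !mxE ksym. Qed.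

Lemma gram_unit Omega K n (X : 'I_n -> T) mu :
  spd_kernel Omega K -> (forall i, Omega (X i)) -> injective X -> 0 <= mu ->
  gram K X + mu%:M \in unitmx.
Proof.
move=> Kspd OX Xinj mu_ge0; rewrite unitmxE unitfE.
apply/negP => /det0P [v v_neq0 vM0].
have [i vi] : exists i, v 0 i != 0.
  apply/existsP; apply: contraNT v_neq0 => /existsPn v0.
  by apply/eqP/matrixP => a b; rewrite (ord1 a) mxE; apply/eqP/negPn.
have q_gt0 : 0 < qform K X (fun i => v 0 i) by apply: Kspd.2 => //; exists i.
have : (v *m (gram K X + mu%:M) *m v^T) 0 0 = 0 by rewrite vM0 mul0mx mxE.
rewrite mulmxDr mulmxDl mxE qform_gram qform_scalar_mx => q0.
have : 0 <= mu * \sum_i v 0 i ^+ 2.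
  by apply: mulr_ge0 => //; apply: sumr_ge0 => j _; apply: sqr_ge0.
lra.
Qed.

Definition interp_weights (Kev : T -> T -> R) n (M : 'M[R]_n) (X : 'I_n -> T)
    (y : T) : 'rV[R]_n :=
  (\row_j Kev y (X j)) *m invmx M.

Lemma kinterpE Kev n (M : 'M[R]_n) (X : 'I_n -> T) f y :
  kinterp Kev M X f y = \sum_i interp_weights Kev M X y 0 i * f (X i).
Proof.
rewrite /kinterp /interp_weights.
under eq_bigr do rewrite mxE mulr_suml.
under [RHS]eq_bigr do rewrite mxE mulr_suml.
rewrite exchange_big /=; apply: eq_bigr => i _; apply: eq_bigr => j _.
by rewrite !mxE; ring.
Qed.

Definition interp_coefs K n (X : 'I_n -> T) mu (f : T -> R) : 'cV[R]_n :=
  invmx (gram K X + mu%:M) *m \col_i f (X i).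

Section Node.
Variables (K : T -> T -> R) (n : nat) (X : 'I_n -> T) (mu : R) (f : T -> R).
Hypothesis unitM : gram K X + mu%:M \in unitmx.
Let a := interp_coefs K X mu f.

Lemma interp_coefsK : (gram K X + mu%:M) *m a = \col_i f (X i).
Proof. exact: mulKVmx. Qed.

Lemma s_n_node_error i : f (X i) - s_n K X mu f (X i) = mu * a i 0.
Proof.
have sE : s_n K X mu f (X i) = (gram K X *m a) i 0.
  by rewrite mxE; apply: eq_bigr => j _; rewrite !mxE mulrC.
have : ((gram K X + mu%:M) *m a) i 0 = f (X i) by rewrite interp_coefsK mxE.
rewrite mulmxDl mul_scalar_mx mxE -sE [X in _ + X]mxE => <-.
by rewrite addrAC subrr add0r.
Qed.

Lemma interp_coefs_energy :
  \sum_j a j 0 * f (X j) = qform K X (fun j => a j 0) + mu * \sum_j a j 0 ^+ 2.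
Proof.
transitivity ((a^T *m ((gram K X + mu%:M) *m a)) 0 0).
  by rewrite interp_coefsK mxE; apply: eq_bigr => j _; rewrite !mxE.
rewrite mulmxA mulmxDr mulmxDl mxE.
have := qform_gram K X a^T; rewrite trmxK => ->.
have := qform_scalar_mx a^T mu; rewrite trmxK => ->.
by congr (_ + _ * _); [congr qform; apply: funext => j|apply: eq_bigr => j _];
  rewrite !mxE.
Qed.

End Node.

Lemma ler_regularized_node (lam N s a S : R) :
  0 < lam -> 0 <= N -> 0 <= s -> a ^+ 2 <= S ->
  s ^+ 2 + lam * S <= N * s -> `|lam * a| <= N * Num.sqrt lam.
Proof.
move=> lam_gt0 N_ge0 s_ge0 aS energy.
have SN : lam * S <= N ^+ 2.
  have := sqr_ge0 (N - s); have := mulr_ge0 N_ge0 s_ge0; rewrite !expr2; nra.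
have sq_le : (lam * a) ^+ 2 <= (N * Num.sqrt lam) ^+ 2.
  rewrite !exprMn (sqr_sqrtr (ltW lam_gt0)) expr2 -mulrA [N ^+ 2 * _]mulrC.
  apply: (ler_wpM2l (ltW lam_gt0)); apply: le_trans SN.
  exact: (ler_wpM2l (ltW lam_gt0)).
rewrite -sqrtr_sqr -[N * _](ger0_norm (mulr_ge0 N_ge0 (sqrtr_ge0 _))) -sqrtr_sqr.
exact: ler_wsqrtr.
Qed.

Lemma P_n_node_le Omega K lam n (X : 'I_n -> T) :
  spd_kernel Omega K -> 0 < lam -> (forall i, Omega (X i)) -> injective X ->
  forall i, (P_n K Omega X lam (X i) <= (Num.sqrt lam)%:E)%E.
Proof.
move=> Kspd lam_gt0 OX Xinj i.
have unitM := gram_unit Kspd OX Xinj (ltW lam_gt0).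
apply: ge_ereal_sup => _ [f [f_native _] <-].
rewrite lee_fin s_n_node_error //.
have := interp_coefs_energy f unitM; set a := interp_coefs K X lam f => energy.
apply: ler_norm_div => [|N_gt0]; first exact: sqrtr_ge0.
have [[j aj]|a0] := pselect (exists j, a j 0 != 0); last first.
  have -> : a i 0 = 0 by apply/eqP; apply: contra_notT a0 => ai; exists i.
  by rewrite mulr0 normr0 mulr_ge0 ?sqrtr_ge0 ?ltW.
have qa_gt0 : 0 < qform K X (fun j => a j 0) by apply: Kspd.2 => //; exists j.
apply: (ler_regularized_node (S := \sum_j a j 0 ^+ 2) lam_gt0 (ltW N_gt0)
  (sqrtr_ge0 (qform K X (fun j => a j 0)))).
  by rewrite (bigD1 i) //= lerDl; apply: sumr_ge0 => l _; apply: sqr_ge0.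
rewrite (sqr_sqrtr (ltW qa_gt0)) -energy.
exact: le_trans (ler_norm _) (native_norm_bound f_native OX qa_gt0).
Qed.

Lemma quad_minimizer n (G : 'M[R]_n) (b u v : 'rV[R]_n) :
  G^T = G -> (forall w : 'rV_n, 0 <= (w *m G *m w^T) 0 0) -> u *m G = b ->
  (u *m G *m u^T) 0 0 - 2 * (u *m b^T) 0 0
    <= (v *m G *m v^T) 0 0 - 2 * (v *m b^T) 0 0.
Proof.
move=> Gsym Gpsd uG; rewrite -[v](subrK u) addrC; move: (v - u) => w.
have uGw : (u *m G *m w^T) 0 0 = (w *m b^T) 0 0.
  by rewrite uG -[w *m _]trmxK trmx_mul trmxK [RHS]mxE.
have wGu : (w *m G *m u^T) 0 0 = (w *m b^T) 0 0.
  by rewrite -mulmxA -{1}Gsym -trmx_mul uG.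
move: (Gpsd w); rewrite linearD /= !mulmxDl !mulmxDr -!trace_mx11 !mxtraceD.
rewrite !trace_mx11 uGw wGu; lra.
Qed.

Definition ext_nodes n (x : T) (X : 'I_n -> T) : 'I_(1 + n) -> T :=
  catf (fun _ : 'I_1 => x) X.

Definition err_coefs n (u : 'rV[R]_n) : 'I_(1 + n) -> R :=
  catf (fun _ : 'I_1 => 1) (fun j => - u 0 j).

Lemma err_coefs_sum n x (X : 'I_n -> T) (u : 'rV[R]_n) (f : T -> R) :
  f x - \sum_j u 0 j * f (X j) = \sum_l err_coefs u l * f (ext_nodes x X l).
Proof.
rewrite /err_coefs /ext_nodes big_split_ord big_ord1 /= !catf_lshift mul1r -sumrN.
by congr (_ + _); apply: eq_bigr => j _; rewrite !catf_rshift mulNr.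
Qed.

Lemma ext_nodes_inj n x (X : 'I_n -> T) :
  injective X -> (forall i, x != X i) -> injective (ext_nodes x X).
Proof.
move=> Xinj xX i j; rewrite /ext_nodes /catf -{2}(splitK i) -{2}(splitK j).
case: (split i) => [a|a]; case: (split j) => [b|b] //= e.
- by rewrite (ord1 a) (ord1 b).
- by move: (xX b); rewrite e eqxx.
- by move: (xX a); rewrite e eqxx.
- by rewrite (Xinj _ _ e).
Qed.

Lemma err_coefs_sqr_ge1 n (u : 'rV[R]_n) : 1 <= \sum_l err_coefs u l ^+ 2.
Proof.
rewrite /err_coefs big_split_ord big_ord1 /= catf_lshift expr1n lerDl.
by apply: sumr_ge0 => j _; apply: sqr_ge0.
Qed.

Lemma err_coefs_neq0 n (u : 'rV[R]_n) : exists l, err_coefs u l != 0.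
Proof. by exists (lshift n ord0); rewrite /err_coefs catf_lshift oner_neq0. Qed.

Lemma qform_err_coefs Omega k n x (X : 'I_n -> T) (u : 'rV[R]_n) :
  sym_on Omega k -> Omega x -> (forall i, Omega (X i)) ->
  qform k (ext_nodes x X) (err_coefs u) =
  k x x + ((u *m gram k X *m u^T) 0 0 - 2 * (u *m (\row_j k x (X j))^T) 0 0).
Proof.
move=> ksym Ox OX; rewrite /ext_nodes /err_coefs qform_cat (bformC _ _ ksym OX) //.
rewrite qform_gram.
have -> : (fun j => - u 0 j) = (fun j => -1 * u 0 j).
  by apply: funext => j; rewrite mulN1r.
rewrite qformZ.
suff -> : bform k X (fun j => -1 * u 0 j) (fun _ : 'I_1 => x) (fun _ => 1) =
          - (u *m (\row_j k x (X j))^T) 0 0.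
  by rewrite /qform !big_ord1; ring.
rewrite /bform mxE -sumrN; apply: eq_bigr => j _.
by rewrite big_ord1 !mxE ksym //; ring.
Qed.

Section PowerOffNodes.
Variables (Omega : set T) (K : T -> T -> R) (n : nat) (X : 'I_n -> T) (x : T).
Hypotheses (Kspd : spd_kernel Omega K) (OX : forall i, Omega (X i))
  (Xinj : injective X) (Ox : Omega x) (xX : forall i, x != X i).

Let Ksym : sym_on Omega K := Kspd.1.
Let Kpsd : psd_on Omega K := spd_kernel_psd Kspd.
Let z := ext_nodes x X.
Let Oz : forall l, Omega (z l) := catf_in (fun _ => Ox) OX.
Let weights mu := interp_weights K (gram K X + mu%:M) X x.

Lemma P_n_off_node mu :
  P_n K Omega X mu x = (Num.sqrt (qform K z (err_coefs (weights mu))))%:E.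
Proof.
apply: (power_fun_eq Ksym Kpsd Oz).
  exact/Kspd.2/err_coefs_neq0/ext_nodes_inj.
by move=> f; rewrite /s_n kinterpE; apply: err_coefs_sum.
Qed.

Lemma qform_Klam_err_coefs lam (u : 'rV[R]_n) :
  qform (Klam K lam) z (err_coefs u) =
  qform K z (err_coefs u) + lam * \sum_l err_coefs u l ^+ 2.
Proof. exact/qform_Klam/ext_nodes_inj. Qed.

(* Off the nodes K_lambda(x, X_j) = K(x, X_j), so I_n^lambda uses the same
   weights as s_n^lambda. *)
Lemma Q_n_off_node lam : 0 <= lam ->
  Q_n K Omega X lam x =
  (Num.sqrt (qform (Klam K lam) z (err_coefs (weights lam))))%:E.
Proof.
move=> lam_ge0.
apply: (power_fun_eq (Klam_sym lam Ksym) (Klam_psd Kspd lam_ge0) Oz).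
  rewrite qform_Klam_err_coefs; apply: ltr_wpDr.
    by apply: mulr_ge0 => //; apply: sumr_ge0 => l _; apply: sqr_ge0.
  exact/Kspd.2/err_coefs_neq0/ext_nodes_inj.
move=> f; rewrite /I_n kinterpE -err_coefs_sum; congr (_ - _).
apply: eq_bigr => j _; congr (_ * _); rewrite /weights /interp_weights.
congr ((_ *m _) _ _); apply/matrixP => a b.
by rewrite !mxE /Klam (negbTE (xX b)) addr0.
Qed.

Lemma P_n0_le_P_n mu : (P_n K Omega X 0 x <= P_n K Omega X mu x)%E.
Proof.
rewrite !P_n_off_node lee_fin; apply: ler_wsqrtr.
rewrite !(qform_err_coefs _ Ksym) // lerD2l /weights raddf0 addr0.
apply: quad_minimizer; first exact: gram_sym Ksym OX.
  by move=> w; rewrite qform_gram; apply: Kpsd.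
have := gram_unit Kspd OX Xinj (lexx 0); rewrite raddf0 addr0 => Gunit.
exact: mulmxKV.
Qed.

Lemma P_n_le_Q_n lam : 0 <= lam ->
  (P_n K Omega X lam x <= Q_n K Omega X lam x)%E.
Proof.
move=> lam_ge0; rewrite P_n_off_node Q_n_off_node // lee_fin.
apply: ler_wsqrtr; rewrite qform_Klam_err_coefs lerDl.
by apply: mulr_ge0 => //; apply: sumr_ge0 => l _; apply: sqr_ge0.
Qed.

Lemma sqrt_le_Q_n lam : 0 <= lam -> ((Num.sqrt lam)%:E <= Q_n K Omega X lam x)%E.
Proof.
move=> lam_ge0; rewrite Q_n_off_node // lee_fin.
apply: ler_wsqrtr; rewrite qform_Klam_err_coefs -[lam]add0r.
apply: lerD; first exact: Kpsd.
by rewrite add0r -[leLHS]mulr1 ler_wpM2l // err_coefs_sqr_ge1.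
Qed.

End PowerOffNodes.

End KernelInterpolation.

Unset Implicit Arguments.

Theorem proposition3p2 (R : realType) (d : nat) (Omega : set 'rV[R]_d)
  (K : 'rV[R]_d -> 'rV[R]_d -> R) (lam : R) (n : nat) (X : 'I_n -> 'rV[R]_d) :
  spd_kernel Omega K -> 0 < lam ->
  (forall i, Omega (X i)) -> injective X ->
  [/\ (forall i, (P_n K Omega X lam (X i) <= (Num.sqrt lam)%:E)%E),
      (forall x, Omega x -> (forall i, x != X i) ->
         (P_n K Omega X 0 x <= P_n K Omega X lam x)%E /\
         (P_n K Omega X lam x <= Q_n K Omega X lam x)%E) &
      ((exists x, Omega x /\ forall i, x != X i) ->
         (ereal_sup (P_n K Omega X lam @` Omega)
          <= ereal_sup (Q_n K Omega X lam @` Omega))%E)].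
Proof.
move=> Kspd lam_gt0 OX Xinj; have lam_ge0 := ltW lam_gt0.
have P_node := P_n_node_le Kspd lam_gt0 OX Xinj.
split=> [//|x Ox xX|[x0 [Ox0 x0X]]].
  by split; [apply: P_n0_le_P_n | apply: P_n_le_Q_n].
apply: ge_ereal_sup => _ [y Oy <-].
have [[i ->]|yX] := pselect (exists i, y = X i).
  apply: le_trans (P_node i) (le_trans (sqrt_le_Q_n Kspd OX Xinj Ox0 x0X lam_ge0) _).
  by apply: ereal_sup_ubound; exists x0.
have yX' i : y != X i by apply/eqP => yXi; apply: yX; exists i.
apply: le_trans (P_n_le_Q_n Kspd OX Xinj Oy yX' lam_ge0) _.
by apply: ereal_sup_ubound; exists y.
Qed.
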